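(* Let $\mathfrak g$ be a finite-dimensional complex simple Lie algebra with dual Coxeter number $h^\vee$ and invariant form $\langle\cdot,\cdot\rangle$ normalized so that the Killing form equals $2h^\vee\langle\cdot,\cdot\rangle$; let $\{v^{(i)}\},\{w^{(i)}\}$ be dual bases of $\mathfrak g$ with respect to $\langle\cdot,\cdot\rangle$. Let $x\in\mathfrak g$ be nilpotent and $\kappa\ne -h^\vee$. Consider the Lie algebra with generators $a_m$ ($a\in\mathfrak g$ linear, $m\in\mathbb Z$) and relations $[a_m,b_n]=[a,b]_{m+n}+\delta_{m,-n}\kappa\langle [x,a]+ma,b\rangle$, and a module $M$ over it on which for every $v\in M$ and $a\in\mathfrak g$ we have $a_mv=0$ for $m\gg0$. Define on $M$ $$L_n=\frac{1}{2(\kappa+h^\vee)}\Big(\sum_i\sum_{m\in\mathbb Z}:v^{(i)}_m w^{(i)}_{n-m}:\;-\;\sum_i\big[[x,v^{(i)}],w^{(i)}\big]_n\Big),$$ where $:a_mb_k:=a_mb_k$ if $m<0$ and $:a_mb_k:=b_ka_m$ if $m\ge0$. Then for all $a\in\mathfrak g$ and $n\in\mathbb Z$, $$[L_{-1},a_n]=-n\,a_{n-1}-([x,a])_{n-1}.$$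
   Context: This is the twisted Sugawara operator for the $g$-twisted mode algebra of the affine vertex algebra at level $\kappa$ with $g=e^{-2\pi i x}$ (the case of trivial semisimple part $s=0$). *)

From HB Require Import structures.
From mathcomp Require Import all_boot all_order all_algebra.
From mathcomp Require Import classical_sets fsbigop reals.
From mathcomp.real_closed Require Import complex.
Set Implicit Arguments. Unset Strict Implicit. Unset Printing Implicit Defensive.
Import Order.TTheory GRing.Theory Num.Theory.
Local Open Scope ring_scope.

Section Sugawara.
Variable R : realType.
Local Notation C := (R[i]).
Variable d : nat.
Local Notation g := 'rV[C]_d.

Definition lie_bracket (br : g -> g -> g) : Prop :=
  [/\ (forall k a b c, br (k *: a + b) c = k *: br a c + br b c),
      (forall k a b c, br a (k *: b + c) = k *: br a b + br a c),
      (forall a, br a a = 0) &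
      (forall a b c, br a (br b c) + br b (br c a) + br c (br a b) = 0)].

Definition lie_ideal (br : g -> g -> g) (I : 'M[C]_d) : Prop :=
  forall a v, (v <= I)%MS -> (br a v <= I)%MS.

Definition lie_simple (br : g -> g -> g) : Prop :=
  (exists a b, br a b != 0) /\
  forall I : 'M[C]_d, lie_ideal br I -> \rank I = 0%N \/ \rank I = d.

Definition killing (br : g -> g -> g) (a b : g) : C :=
  \tr (lin1_mx (br a) *m lin1_mx (br b)).

Definition invariant_form (br : g -> g -> g) (form : g -> g -> C) : Prop :=
  [/\ (forall k a b c, form (k *: a + b) c = k * form a c + form b c),
      (forall a b, form a b = form b a),
      (forall a b c, form (br a b) c = form a (br b c)) &
      (forall a, (forall b, form a b = 0) -> a = 0)].

Definition lie_nilpotent (br : g -> g -> g) (x : g) : Prop :=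
  exists k : nat, forall v, iter k (br x) v = 0.

Variable M : lmodType C.

(* M is a module over the (g = e^{-2 pi i x})-twisted mode algebra at level kappa:
   rho a m is the action of the generator a_m *)
Definition twisted_module (br : g -> g -> g) (form : g -> g -> C) (x : g)
  (kappa : C) (rho : g -> int -> M -> M) : Prop :=
  [/\ (forall k a b m u, rho (k *: a + b) m u = k *: rho a m u + rho b m u),
      (forall k a m u u', rho a m (k *: u + u') = k *: rho a m u + rho a m u'),
      (forall a b m n u,
          rho a m (rho b n u) - rho b n (rho a m u) =
          rho (br a b) (m + n) u
          + ((m == - n)%:R * kappa * form (br x a + m%:~R *: a) b) *: u) &
      (forall u a, exists N : int, forall m : int, N <= m -> rho a m u = 0)].

Definition normal_ord (rho : g -> int -> M -> M) (a b : g) (m k : int) (u : M) : M :=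
  if m < 0 then rho a m (rho b k u) else rho b k (rho a m u).

Definition sugawara (br : g -> g -> g) (x : g) (kappa : C) (hv : nat)
  (vb wb : 'I_d -> g) (rho : g -> int -> M -> M) (n : int) (u : M) : M :=
  (2 * (kappa + hv%:R))^-1 *:
    (\sum_(i < d) (\sum_(m \in [set: int]) normal_ord rho (vb i) (wb i) m (n - m) u)%classic
     - \sum_(i < d) rho (br (br x (vb i)) (wb i)) n u).

End Sugawara.

From HB Require Import structures.
From mathcomp Require Import all_boot all_order all_algebra.
From mathcomp Require Import classical_sets fsbigop reals.
From mathcomp.real_closed Require Import complex.
From mathcomp Require Import sesquilinear zify.
Import Order.TTheory GRing.Theory Num.Theory.
Set Implicit Arguments. Unset Strict Implicit. Unset Printing Implicit Defensive.
Local Open Scope ring_scope.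

(* On a fixed vector u only finitely many modes act, so the normally ordered
   sum defining L_{-1} u truncates, and by the symmetry of the Casimir tensor
   sum_i v^(i) (x) w^(i) it equals 2 sum_i sum_(j<L) v^(i)_{-1-j} w^(i)_j u.
   The normalisation of the Killing form makes the Casimir act on g as 2h^v;
   in particular sum_i [[x,v^(i)],w^(i)] = 2h^v x, so the linear part of
   2(kappa+h^v) L_{-1} is -2h^v x_{-1}.
   Commuting a_n through the truncated quadratic part gives bracket terms and
   central terms.  The bracket terms telescope, after a shift of the
   summation window, to |n| pairs of modes of total degree n-1; averaging
   each pair with its reverse turns it into a commutator, worth
   2h^v a_{n-1} (plus a multiple of <x,a> when n = 1).  By invariance of the
   form the central terms collect to kappa (-n a - [x,a])_{n-1}.  The <x,a>
   terms cancel against the commutator with -2h^v x_{-1}, and what is left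
   is 2(kappa+h^v) times the right-hand side. *)

Section DualBasis.
Variables (K : fieldType) (d : nat).
Variable f : {bilinear 'rV[K]_d -> 'rV[K]_d -> K | *%R & *%R}.
Variables p q : 'I_d -> 'rV[K]_d.
Hypothesis pq_dual : forall i j, f (p i) (q j) = (i == j)%:R.

Lemma dual_basis_expansion z : z = \sum_i f (p i) z *: q i.
Proof.
pose Q : 'M[K]_d := \matrix_(i, j) q i 0 j.
have rowQ i : row i Q = q i by apply/rowP=> j; rewrite !mxE.
have coordQ (c : 'rV[K]_d) j : f (p j) (c *m Q) = c 0 j.
  rewrite mulmx_sum_row linear_sumr.
  under eq_bigr do rewrite rowQ linearZr /= pq_dual.
  rewrite (bigD1 j) //= eqxx mulr1 big1 ?addr0 // => i ne_ij.
  by rewrite eq_sym (negbTE ne_ij) mulr0.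
have Q_unit : Q \in unitmx.
  rewrite -row_free_unit; apply: inj_row_free => c cQ0; apply/rowP => j.
  by rewrite -coordQ cQ0 linear0r mxE.
rewrite -{1 2}(mulmxKV Q_unit z); under eq_bigr do rewrite coordQ -rowQ.
by rewrite -mulmx_sum_row.
Qed.

End DualBasis.

Lemma sum_window_shift (V : zmodType) (F : int -> V) (L : nat) (n : int) :
  (forall m, m <= n - 1 - L%:Z -> F m = 0) ->
  \sum_(j < L + `|n|) F (-1 - j%:Z) - \sum_(j < L + `|n|) F (n - 1 - j%:Z) =
  if 0 <= n then - \sum_(j < `|n|) F (n - 1 - j%:Z)
  else \sum_(j < `|n|) F (-1 - j%:Z).
Proof.
case: n => k F0 /=.
- rewrite [in X in _ - X]addnC !big_split_ord /=.
  rewrite [X in _ + X - _]big1 => [|j _]; last by apply: F0; lia.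
  rewrite addr0 opprD addrA.
  rewrite (_ : \sum_(j < L) F (k%:Z - 1 - (k + j)%N%:Z) = \sum_(j < L) F (-1 - j%:Z)).
    by rewrite addrAC subrr add0r.
  by apply: eq_bigr => j _; congr F; lia.
- rewrite [in X in X - _]addnC !big_split_ord /=.
  rewrite [X in _ - (_ + X)]big1 => [|j _]; last by apply: F0; rewrite NegzE; lia.
  rewrite addr0 (_ : \sum_(j < L) F (Negz k - 1 - j%:Z)
                   = \sum_(j < L) F (-1 - (k.+1 + j)%N%:Z)) ?addrK //.
  by apply: eq_bigr => j _; rewrite NegzE; congr F; lia.
Qed.

Lemma sum_ord_delta (K : pzRingType) (V : lmodType K) (L : nat) (t : int) (F : int -> V) :
  \sum_(j < L) (j%:Z == t)%:R *: F j = ((0 <= t) && (t < L%:Z))%:R *: F t.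
Proof.
under eq_bigr do rewrite scaler_nat mulrb; rewrite scaler_nat mulrb -big_mkcond /=.
case: t => k /=; last by rewrite big_pred0.
rewrite ltz_nat (eq_bigl (fun j : 'I_L => j == k :> nat)) => [|j]; last by rewrite eqz_nat.
exact: (big_ord1_eq _ (fun j : nat => F j%:Z)).
Qed.

Section TwistedSugawara.
Variable R : realType.
Local Notation C := R[i].
Variable d : nat.
Local Notation g := 'rV[C]_d.
Variables (br : g -> g -> g) (form : g -> g -> C) (hv : nat) (vb wb : 'I_d -> g).
Variables (x : g) (kappa : C) (M : lmodType C) (rho : g -> int -> M -> M).
Hypotheses (br_lie : lie_bracket br) (form_invariant : invariant_form br form).
Hypothesis killing_normalized : forall a b, killing br a b = 2 * hv%:R * form a b.
Hypothesis vw_dual : forall i j, form (vb i) (wb j) = (i == j)%:R.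
Hypothesis rho_twisted : twisted_module br form x kappa rho.

Let br_bilinear : bilinear_for *:%R *:%R br.
Proof. by case: br_lie => brl brr _ _; split=> ? ? ? ?; [apply: brl | apply: brr]. Qed.
HB.instance Definition _ := bilinear_isBilinear.Build C g g g *:%R *:%R br br_bilinear.
HB.instance Definition _ a := GRing.isLinear.Build C g g *:%R (br a) (br_bilinear.2 a).

Lemma brxx a : br a a = 0.
Proof. by case: br_lie. Qed.

Lemma br_antisym a b : br a b = - br b a.
Proof.
apply/eqP; rewrite -addr_eq0; have := brxx (a + b).
by rewrite linearDl /= !linearDr /= !brxx add0r addr0 => ->.
Qed.

Lemma formC a b : form a b = form b a.
Proof. by case: form_invariant. Qed.

Lemma form_br a b c : form (br a b) c = form a (br b c).
Proof. by case: form_invariant. Qed.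

Lemma form_nondeg a : (forall b, form a b = 0) -> a = 0.
Proof. by case: form_invariant => _ _ _; apply. Qed.

Let form_bilinear : bilinear_for *%R *%R form.
Proof.
case: form_invariant => forml _ _ _; split=> [c k a b | a k b c]; first exact: forml.
by rewrite formC forml !(formC a).
Qed.
HB.instance Definition _ := bilinear_isBilinear.Build C g g C *%R *%R form form_bilinear.

Lemma vw_expand z : z = \sum_i form (vb i) z *: wb i.
Proof. exact: dual_basis_expansion. Qed.

Lemma wv_expand z : z = \sum_i form z (wb i) *: vb i.
Proof.
have wv_dual i j : form (wb i) (vb j) = (i == j)%:R by rewrite formC vw_dual eq_sym.
rewrite {1}(dual_basis_expansion wv_dual z).
by apply: eq_bigr => i _; rewrite formC.
Qed.

Section DualSums.
Variables (V : lmodType C) (E : g -> g -> V).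
Hypothesis E_bilinear : bilinear_for *:%R *:%R E.
HB.instance Definition _ := bilinear_isBilinear.Build C g g V *:%R *:%R E E_bilinear.

Lemma sum_dual_swap : \sum_i E (vb i) (wb i) = \sum_i E (wb i) (vb i).
Proof.
transitivity (\sum_j \sum_i form (wb j) (wb i) *: E (vb j) (vb i)).
  apply: eq_bigr => j _; rewrite {1}(wv_expand (wb j)) linear_sumr.
  by apply: eq_bigr => i _; rewrite linearZr.
rewrite exchange_big /=; apply: eq_bigr => i _.
rewrite [in RHS](wv_expand (wb i)) linear_sumlz; apply: eq_bigr => j _.
by rewrite linearZl formC.
Qed.

Lemma sum_dual_ad a : \sum_i E (br (vb i) a) (wb i) = - \sum_i E (vb i) (br (wb i) a).
Proof.
transitivity (\sum_i \sum_j form (br (vb i) a) (wb j) *: E (vb j) (wb i)).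
  apply: eq_bigr => i _; rewrite {1}(wv_expand (br (vb i) a)) linear_sumlz.
  by apply: eq_bigr => j _; rewrite linearZl.
rewrite exchange_big /= -sumrN; apply: eq_bigr => j _.
under eq_bigr do rewrite form_br.
rewrite (br_antisym (wb j)) linearNr /= opprK [X in E _ X]vw_expand linear_sumr.
by apply: eq_bigr => i _; rewrite linearZr.
Qed.
End DualSums.

Lemma mxtrace_lin1 (f : {linear g -> g}) : \tr (lin1_mx f) = \sum_i form (vb i) (f (wb i)).
Proof.
transitivity (\sum_j \sum_i form (vb i) (f 'e_j) * wb i 0 j).
  apply: eq_bigr => j _; rewrite mxE {1}(vw_expand (f 'e_j)) summxE.
  by apply: eq_bigr => i _; rewrite mxE.
rewrite exchange_big /=; apply: eq_bigr => i _.
rewrite [in RHS](row_sum_delta (wb i)) linear_sum linear_sumr.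
by apply: eq_bigr => j _; rewrite linearZ linearZr mulrC.
Qed.

Lemma killing_dual a b : killing br a b = \sum_i form (vb i) (br b (br a (wb i))).
Proof.
rewrite /killing; have -> : lin1_mx (br a) *m lin1_mx (br b) = lin1_mx (br b \o br a).
  by apply/row_matrixP => j; rewrite !rowE mulmxA !mul_rV_lin1.
exact: mxtrace_lin1.
Qed.

Lemma casimir_ad a : \sum_i br (vb i) (br (wb i) a) = (2 * hv%:R) *: a.
Proof.
apply/eqP; rewrite -subr_eq0; apply/eqP/form_nondeg => b.
rewrite linearBl linearZl /= -killing_normalized killing_dual linear_sumlz /=.
apply/eqP; rewrite subr_eq0; apply/eqP/eq_bigr => i _.
by rewrite form_br br_antisym (br_antisym (wb i)) !linearNr opprK.
Qed.

Lemma sum_dual_br : \sum_i br (vb i) (wb i) = 0.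
Proof.
suff /eqP : (2 : C) *: \sum_i br (vb i) (wb i) = 0 by rewrite scaler_eq0 pnatr_eq0 => /eqP.
rewrite scaler_nat mulr2n [X in X + _]sum_dual_swap //.
by under eq_bigr do rewrite br_antisym; rewrite sumrN addNr.
Qed.

Lemma casimir_x : \sum_i br (br x (vb i)) (wb i) = (2 * hv%:R) *: x.
Proof.
transitivity (\sum_i br (wb i) (br (vb i) x)).
  by apply: eq_bigr => i _; rewrite br_antisym (br_antisym x) linearNr opprK.
rewrite -(sum_dual_swap (E := fun p q => br p (br q x))) ?casimir_ad //.
by split=> ? ? ? ?; rewrite /= ?linearPl ?linearPr /= ?linearPl.
Qed.

Lemma sum_cocycle_dual (t : C) a :
  \sum_i form (br x (vb i) + t *: vb i) (br (wb i) a) = 2 * hv%:R * form x a.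
Proof.
under eq_bigr do rewrite linearDl linearZl /= form_br -[form (vb _) _]form_br.
rewrite big_split /= -mulr_sumr -(linear_sumr form) -(linear_sumlz form) /=.
by rewrite casimir_ad sum_dual_br linearZr linear0l mulr0 addr0.
Qed.

Lemma rhoPl k a b m u : rho (k *: a + b) m u = k *: rho a m u + rho b m u.
Proof. by case: rho_twisted. Qed.

Let rho_linear a m : linear (rho a m).
Proof. by case: rho_twisted => _ rhor _ _ k u v; apply: rhor. Qed.
HB.instance Definition _ a m := GRing.isLinear.Build C M M *:%R (rho a m) (rho_linear a m).

Lemma rho_commutator a b m n u :
  rho a m (rho b n u) - rho b n (rho a m u) =
  rho (br a b) (m + n) u + ((m == - n)%:R * kappa * form (br x a + m%:~R *: a) b) *: u.
Proof. by case: rho_twisted => _ _ + _; apply. Qed.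

Lemma rho_truncation u a : exists N : int, forall m, N <= m -> rho a m u = 0.
Proof. by case: rho_twisted => _ _ _; apply. Qed.

Let rho_at m u : {linear g -> M} :=
  HB.pack (fun a => rho a m u) (GRing.isLinear.Build C g M *:%R _ (fun k a b => rhoPl k a b m u)).

Lemma rhoZl k a m u : rho (k *: a) m u = k *: rho a m u.
Proof. exact: (linearZ_LR (rho_at m u)). Qed.

Lemma rhoBl a b m u : rho (a - b) m u = rho a m u - rho b m u.
Proof. exact: (linearB (rho_at m u)). Qed.

Lemma rho_suml I (r : seq I) (P : pred I) (F : I -> g) m u :
  rho (\sum_(i <- r | P i) F i) m u = \sum_(i <- r | P i) rho (F i) m u.
Proof. exact: (linear_sum (rho_at m u)). Qed.

Definition annihilated (u : M) (L : nat) := forall a k, L%:Z <= k -> rho a k u = 0.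

Lemma annihilated_ge u L L' : annihilated u L -> (L <= L')%N -> annihilated u L'.
Proof. by move=> uL le_LL' a k k_ge; apply: uL; lia. Qed.

Lemma annihilated_exists u : exists L, annihilated u L.
Proof.
have /fin_all_exists [N wN] := fun i => rho_truncation u (wb i).
exists (\max_i `|N i|)%N => b k k_ge; rewrite (vw_expand b) rho_suml big1 // => i _.
rewrite rhoZl wN ?scaler0 //; apply: le_trans (le_trans (lez_abs _) _) k_ge.
by rewrite lez_nat (@leq_bigmax _ (fun j => `|N j|%N)).
Qed.

Lemma normal_ord_sum_finite u v w L : annihilated u L ->
  (\sum_(m \in [set: int]) normal_ord rho v w m (-1 - m) u)%classic =
  \sum_(j < L) (rho v (-1 - j%:Z) (rho w j u) + rho w (-1 - j%:Z) (rho v j u)).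
Proof.
move=> uL; pose r := [seq -1 - j%:Z | j <- iota 0 L] ++ [seq j%:Z | j <- iota 0 L].
rewrite (fsbigE r) => [|||m _]; last 3 first.
- rewrite cat_uniq !map_inj_uniq ?iota_uniq => [|i j|i j]; try lia.
  by rewrite andbT; apply/hasPn => _ /mapP[j _ ->]; apply/mapP => -[k _]; lia.
- by [].
- rewrite mem_cat negb_or => /andP[/mapP m_neg /mapP m_pos].
  rewrite /normal_ord; case: ifP => m_lt0.
    case: (boolP (-1 - m < L%:Z)) => [?|L_le]; last by rewrite uL ?linear0 //; lia.
    by case: m_neg; exists `|(-1 - m)%R|%N; rewrite ?mem_iota; lia.
  case: (boolP (m < L%:Z)) => [?|L_le]; last by rewrite (uL v) ?linear0 //; lia.
  by case: m_pos; exists `|m|%N; rewrite ?mem_iota; lia.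
rewrite big_cat !big_map /= -[L in iota 0 L]subn0 -/(index_iota 0 L) !big_mkord -big_split /=.
apply: eq_big => [j|j _]; first by rewrite in_setT.
rewrite /normal_ord ifT; last lia.
by rewrite ltNge le0z_nat /=; congr (rho _ _ (rho _ _ _) + _); lia.
Qed.

Lemma rho_rho_bilinear (P Q : int) u :
  bilinear_for *:%R *:%R (fun p q => rho p P (rho q Q u)).
Proof. by split=> ? ? ? ?; rewrite /= rhoPl ?linearP. Qed.

Lemma sum_rho_rho_bilinear (P Q : nat -> int) L u :
  bilinear_for *:%R *:%R (fun p q => \sum_(j < L) rho p (P j) (rho q (Q j) u)).
Proof.
split=> c k a b /=; rewrite scaler_sumr -big_split; apply: eq_bigr => j _.
  exact: (rho_rho_bilinear _ _ _).1.
exact: (rho_rho_bilinear _ _ _).2.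
Qed.

Definition sugawara_trunc (L : nat) (u : M) :=
  \sum_i \sum_(j < L) rho (vb i) (-1 - j%:Z) (rho (wb i) j u).

Definition bracket_terms L a n u :=
  \sum_i \sum_(j < L) rho (vb i) (-1 - j%:Z) (rho (br (wb i) a) (n - 1 - (-1 - j%:Z)) u)
  + \sum_i \sum_(j < L) rho (br (vb i) a) (n - 1 - j%:Z) (rho (wb i) j u).

Definition central_terms L a n u :=
  \sum_i \sum_(j < L) ((j%:Z == - n)%:R * kappa * form (br x (wb i) + j%:~R *: wb i) a)
                        *: rho (vb i) (-1 - j%:Z) u
  + \sum_i \sum_(j < L) ((-1 - j%:Z == - n)%:R * kappa
                         * form (br x (vb i) + (-1 - j%:Z)%:~R *: vb i) a) *: rho (wb i) j u.

Lemma sugawara_quadratic_finite u L : annihilated u L ->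
  \sum_i (\sum_(m \in [set: int]) normal_ord rho (vb i) (wb i) m (-1 - m) u)%classic
  = 2 *: sugawara_trunc L u.
Proof.
move=> uL; under eq_bigr do rewrite (normal_ord_sum_finite _ _ uL) big_split.
rewrite big_split /= scaler_nat mulr2n.
rewrite -(sum_dual_swap (E := fun p q => \sum_(j < L) rho p (-1 - j%:Z) (rho q j u))) //.
exact: (sum_rho_rho_bilinear (fun j => -1 - j%:Z) (fun j => j%:Z)).
Qed.

Lemma sum_dual_rho_swap (P Q : int) u a :
  \sum_i rho (vb i) P (rho (br (wb i) a) Q u) = - \sum_i rho (br (wb i) a) P (rho (vb i) Q u).
Proof.
rewrite (sum_dual_swap (E := fun p q => rho p P (rho (br q a) Q u))).
  rewrite -(sum_dual_ad (E := fun p q => rho q P (rho p Q u))) //.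
  by split=> ? ? ? ?; rewrite /= rhoPl ?linearP.
by split=> ? ? ? ?; rewrite /= ?linearPl /= rhoPl ?linearP.
Qed.

Lemma sum_dual_commutator a (m s : int) u :
  \sum_i (rho (vb i) m (rho (br (wb i) a) (s - m) u) - rho (br (wb i) a) (s - m) (rho (vb i) m u))
  = (2 * hv%:R) *: rho a s u + ((s == 0)%:R * kappa * (2 * hv%:R * form x a)) *: u.
Proof.
under eq_bigr do rewrite rho_commutator subrKC -mulrA.
have -> : (m == - (s - m)) = (s == 0) by apply/eqP/eqP; lia.
rewrite big_split /= -rho_suml casimir_ad rhoZl -scaler_suml -!mulr_sumr.
by rewrite sum_cocycle_dual mulrA.
Qed.

(* Reversing the range swaps the two modes of each pair, so averaging the
   sum with its reverse turns every pair into a commutator. *)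
Lemma sum_mode_pairs (s : int) (k : nat) (p : nat -> int) a u :
  (forall j, (j < k)%N -> p (k.-1 - j)%N = s - p j) ->
  2 *: \sum_(j < k) \sum_i rho (vb i) (p j) (rho (br (wb i) a) (s - p j) u)
  = k%:R *: ((2 * hv%:R) *: rho a s u + ((s == 0)%:R * kappa * (2 * hv%:R * form x a)) *: u).
Proof.
move=> p_rev; set X := \sum_(j < k) _.
have X_rev : X = - \sum_(j < k) \sum_i rho (br (wb i) a) (s - p j) (rho (vb i) (p j) u).
  rewrite /X (reindex_inj rev_ord_inj) -sumrN; apply: eq_bigr => j _ /=.
  have -> : (k - j.+1 = k.-1 - j)%N by lia.
  by rewrite p_rev // sum_dual_rho_swap subKr.
rewrite scaler_nat mulr2n {2}X_rev /X -sumrB.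
by under eq_bigr do rewrite -sumrB sum_dual_commutator; rewrite sumr_const card_ord scaler_nat.
Qed.

Lemma bracket_termsE a n u L : annihilated u L ->
  2 *: bracket_terms (L + `|n|) a n u
  = - ((n%:~R * (2 * hv%:R)) *: rho a (n - 1) u)
    - ((n == 1)%:R * kappa * (2 * hv%:R * form x a)) *: u.
Proof.
move=> uL; rewrite /bracket_terms; set N := (L + `|n|)%N.
pose F m := \sum_i rho (vb i) m (rho (br (wb i) a) (n - 1 - m) u).
have -> : \sum_i \sum_(j < N) rho (br (vb i) a) (n - 1 - j%:Z) (rho (wb i) j u)
          = - \sum_(j < N) F (n - 1 - j%:Z).
  rewrite (sum_dual_ad (E := fun p q => \sum_(j < N) rho p (n - 1 - j%:Z) (rho q j u))); last first.
    exact: (sum_rho_rho_bilinear (fun j => n - 1 - j%:Z) (fun j => j%:Z)).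
  rewrite exchange_big /=; congr (- _); apply: eq_bigr => j _; rewrite /F.
  by apply: eq_bigr => i _; rewrite subKr.
rewrite exchange_big /= sum_window_shift => [|m m_le]; last first.
  by rewrite /F big1 // => i _; rewrite uL ?linear0 //; lia.
move: @N @F; case: n => k N F /=.
- rewrite scalerN (sum_mode_pairs (p := fun j : nat => k%:Z - 1 - j%:Z)) => [|j j_lt]; last lia.
  rewrite scalerDr !scalerA opprD; congr (- (_ *: _) - (_ *: _)).
  have [->|k_ne1] := eqVneq k 1%N; first by rewrite !mul1r.
  have -> : (k%:Z - 1 == 0) = false by apply/negbTE/eqP; lia.
  by rewrite (_ : (k%:Z == 1) = false) ?mul0r ?mulr0 //; apply/negbTE/eqP; lia.
- rewrite (sum_mode_pairs (p := fun j : nat => -1 - j%:Z)) => [|j j_lt]; last by rewrite NegzE; lia.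
  have -> : (Negz k - 1 == 0) = false by apply/negbTE/eqP; rewrite NegzE; lia.
  by rewrite !mul0r scale0r addr0 subr0 scalerA NegzE intrN mulNr scaleNr opprK.
Qed.

Lemma form_cocycle w (t : C) a : form (br x w + t *: w) a = form (t *: a - br x a) w.
Proof.
rewrite linearDl /= linearBl /= !linearZl /= form_br br_antisym linearNr /= -form_br.
by rewrite (formC w) addrC.
Qed.

Lemma central_termsE a n u L : (`|n| < L)%N ->
  central_terms L a n u = kappa *: rho ((- n)%:~R *: a - br x a) (n - 1) u.
Proof.
move=> n_lt; rewrite /central_terms; set z := (- n)%:~R *: a - br x a.
have shift (j : nat) : (-1 - j%:Z == - n) = (j%:Z == n - 1) by apply/eqP/eqP; lia.
under eq_bigr do under eq_bigr do rewrite -mulrA -scalerA.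
under [X in _ + X]eq_bigr do under eq_bigr do rewrite shift -mulrA -scalerA.
under eq_bigr => i _ do rewrite (sum_ord_delta _ _
  (fun m => (kappa * form (br x (wb i) + m%:~R *: wb i) a) *: rho (vb i) (-1 - m) u)).
under [X in _ + X]eq_bigr => i _ do rewrite (sum_ord_delta _ _
  (fun m => (kappa * form (br x (vb i) + (-1 - m)%:~R *: vb i) a) *: rho (wb i) m u)).
have -> : -1 - - n = n - 1 by lia.
have -> : -1 - (n - 1) = - n by lia.
have -> : (0 <= - n) && (- n < L%:Z) = (n <= 0) by apply/idP/idP => [/andP[]|?]; [|apply/andP; split]; lia.
have -> : (0 <= n - 1) && (n - 1 < L%:Z) = ~~ (n <= 0).
  by apply/idP/idP => [/andP[]|?]; [|apply/andP; split]; lia.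
rewrite -!scaler_sumr /=.
under eq_bigr do rewrite form_cocycle -scalerA -rhoZl.
under [X in _ + _ *: X]eq_bigr do rewrite form_cocycle formC -scalerA -rhoZl.
rewrite -!scaler_sumr -!rho_suml -wv_expand -vw_expand.
by case: (n <= 0); rewrite /= ?scale1r ?scale0r ?addr0 ?add0r.
Qed.

Lemma sugawara_trunc_commutator a n u L :
  sugawara_trunc L (rho a n u) - rho a n (sugawara_trunc L u)
  = bracket_terms L a n u + central_terms L a n u.
Proof.
rewrite /sugawara_trunc /bracket_terms /central_terms linear_sum -sumrB -!big_split /=.
apply: eq_bigr => i _.
rewrite linear_sum -sumrB -!big_split /=; apply: eq_bigr => j _.
set v := vb i; set w := wb i; set p := -1 - j%:Z.
rewrite -[LHS](subrKA (rho v p (rho a n (rho w j u)))) -linearB /=.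
rewrite rho_commutator rho_commutator linearD linearZ /= addrACA.
by congr (rho _ _ (rho _ _ _) + rho _ _ _ + _); rewrite /p; lia.
Qed.

Lemma casimir_x_commutator a n u :
  \sum_i rho (br (br x (vb i)) (wb i)) (-1) (rho a n u)
  - rho a n (\sum_i rho (br (br x (vb i)) (wb i)) (-1) u)
  = (2 * hv%:R) *: rho (br x a) (n - 1) u - ((n == 1)%:R * kappa * (2 * hv%:R * form x a)) *: u.
Proof.
rewrite -!rho_suml casimir_x rho_commutator linearZl /= rhoZl.
rewrite linearZr /= brxx scaler0 add0r !linearZl /= eqr_opp eq_sym (addrC (-1)) addrC.
by rewrite (_ : (-1)%:~R = -1 :> C) // mulN1r mulrN scaleNr.
Qed.

Lemma sugawara_Lm1_commutator a n u : kappa != - hv%:R ->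
  sugawara br x kappa hv vb wb rho (-1) (rho a n u)
  - rho a n (sugawara br x kappa hv vb wb rho (-1) u)
  = - (n%:~R *: rho a (n - 1) u) - rho (br x a) (n - 1) u.
Proof.
move=> kappa_ncrit.
have [L1 uL1] := annihilated_exists u; have [L2 auL2] := annihilated_exists (rho a n u).
set L := (L1 + L2).+1.
have uL : annihilated u L by apply: annihilated_ge uL1 _; lia.
rewrite /sugawara !(sugawara_quadratic_finite (L := (L + `|n|)%N)); last 2 first.
- by apply: annihilated_ge uL1 _; lia.
- by apply: annihilated_ge auL2 _; lia.
rewrite [rho a n (_ *: _)]linearZ /= -scalerBr [rho a n (_ - _)]linearB /=.
rewrite [rho a n (_ *: _)]linearZ /=.
rewrite (_ : forall p q r t : M, 2 *: p - q - (2 *: r - t) = 2 *: (p - r) - (q - t)); last first.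
  by move=> p q r t; rewrite scalerBr !opprB addrACA [RHS]addrACA (addrC (- q)).
rewrite sugawara_trunc_commutator casimir_x_commutator [2 *: (_ + _)]scalerDr.
rewrite (bracket_termsE _ _ uL) central_termsE; last lia.
rewrite rhoBl rhoZl intrN scaleNr.
set A := rho a (n - 1) u; set B := rho (br x a) (n - 1) u; set D := - (n%:~R *: A) - B.
rewrite opprB addrA [- _ - _ + _]addrAC subrK addrAC (mulrC n%:~R) -(scalerA (2 * hv%:R)).
rewrite -scalerN -scalerBr -/D.
rewrite scalerA -scalerDl scalerA (addrC (2 * _)) -mulrDr mulVf ?scale1r //.
by apply: mulf_neq0; [rewrite pnatr_eq0 | rewrite addr_eq0].
Qed.
End TwistedSugawara.

Theorem mainTheorem2 (R : realType) (d : nat)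
  (br : 'rV[R[i]]_d -> 'rV[R[i]]_d -> 'rV[R[i]]_d)
  (form : 'rV[R[i]]_d -> 'rV[R[i]]_d -> R[i]) (hv : nat)
  (vb wb : 'I_d -> 'rV[R[i]]_d) (x : 'rV[R[i]]_d) (kappa : R[i])
  (M : lmodType R[i]) (rho : 'rV[R[i]]_d -> int -> M -> M) :
  lie_bracket br -> lie_simple br ->
  invariant_form br form -> (0 < hv)%N ->
  (forall a b, killing br a b = 2 * hv%:R * form a b) ->
  (forall i j, form (vb i) (wb j) = (i == j)%:R) ->
  lie_nilpotent br x ->
  kappa != - hv%:R ->
  twisted_module br form x kappa rho ->
  forall (a : 'rV[R[i]]_d) (n : int) (u : M),
    sugawara br x kappa hv vb wb rho (-1) (rho a n u)
    - rho a n (sugawara br x kappa hv vb wb rho (-1) u)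
    = - (n%:~R *: rho a (n - 1) u) - rho (br x a) (n - 1) u.
Proof.
move=> lie _ form_inv _ killing_form dual _ kappa_ncrit twisted a n u.
exact: (sugawara_Lm1_commutator lie form_inv killing_form dual twisted a n u kappa_ncrit).
Qed.
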